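(* Let $w:=3/\sqrt{2}$, and for $t\in[0,w]$ put $x:=-t+wi$. Define $M(q,t):=|(1+qx)(1+q/x)|$ and $M_0(q,t):=(1-q)M(q,t)$. Then: for each fixed $q\in[0.6,1]$, the functions $t\mapsto M(q,t)$ and $t\mapsto M_0(q,t)$ on $[0,w]$ attain their maximum at $t=0$; and for each fixed $q\in[0.6,0.75]$, the functions $t\mapsto M(q,t)$ and $t\mapsto M_0(q,t)$ on $[1,w]$ attain their maximum at $t=1$. *)

From Stdlib Require Import Reals.
From Coquelicot Require Import Coquelicot.
Open Scope R_scope.

Definition w : R := 3 / sqrt 2.

Definition xpt (t : R) : C := (RtoC (- t) + RtoC w * Ci)%C.

Definition M (q t : R) : R :=
  Cmod ((RtoC 1 + RtoC q * xpt t) * (RtoC 1 + RtoC q / xpt t))%C.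

Definition M0 (q t : R) : R := (1 - q) * M q t.

(** [M(q,t)^2] is a rational function of [t], and for [s = 0] or [s = 1] the
    difference [M(q,s)^2 - M(q,t)^2] factors as [q (t - s)] times a polynomial
    over a positive denominator. The polynomial dominates a positive multiple
    of a cubic in [t] alone, via [2q <= 1 + q^2] for [s = 0] and
    [25q <= 12(1 + q^2)] (valid for [0 <= q <= 3/4]) for [s = 1]. On
    [0 <= t <= w] one has [t^3 <= 9t/2], which bounds the cubic below by a
    quadratic with negative discriminant. *)

From Stdlib Require Import Reals Lra Psatz.
From Coquelicot Require Import Coquelicot.
Open Scope R_scope.

Lemma w_sqr : w ^ 2 = 9 / 2.
Proof.
assert (Hsqrt2 : 0 < sqrt 2) by (apply sqrt_lt_R0; lra).
unfold w; replace ((3 / sqrt 2) ^ 2) with (9 / (sqrt 2 * sqrt 2)) by (field; lra).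
rewrite sqrt_sqrt; lra.
Qed.

Lemma sqr_le_w_sqr (t : R) : 0 <= t <= w -> t ^ 2 <= 9 / 2.
Proof. intros Ht; rewrite <- w_sqr; nra. Qed.

Definition Msq (q t : R) : R :=
  ((1 - q * t) ^ 2 + 9 / 2 * q ^ 2) * ((q - t) ^ 2 + 9 / 2) / (t ^ 2 + 9 / 2).

Lemma M_sqrt_Msq (q t : R) : M q t = sqrt (Msq q t).
Proof.
unfold M, Msq; rewrite Cmod_mult; unfold Cmod; rewrite <- sqrt_mult; try nra.
pose proof w_sqr as Hw.
assert (Hx : 0 < t * t + w * w) by nra.
f_equal; unfold xpt; simpl; rewrite <- Hw; field; nra.
Qed.

Lemma M_M0_le_of_Msq_le (q t s : R) :
  q <= 1 -> Msq q t <= Msq q s -> M q t <= M q s /\ M0 q t <= M0 q s.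
Proof.
intros Hq Hts.
assert (HM : M q t <= M q s) by (rewrite !M_sqrt_Msq; apply sqrt_le_1_alt; exact Hts).
split; [exact HM | unfold M0; apply Rmult_le_compat_l; lra].
Qed.

Definition gap0 (q t : R) : R :=
  18 * (1 + q ^ 2) * (2 * t ^ 2 + 11) - q * t * (18 * t ^ 2 + 149).

Lemma Msq_sub_at0 (q t : R) :
  Msq q 0 - Msq q t = q * t * gap0 q t / (9 * (2 * t ^ 2 + 9)).
Proof. unfold Msq, gap0; field; nra. Qed.

Lemma gap0_ge0 (q t : R) : 0 <= t -> t ^ 2 <= 9 / 2 -> 0 <= gap0 q t.
Proof.
intros Ht0 Htw.
assert (Hcube : t ^ 3 <= 9 / 2 * t) by nra.
assert (Hquad : 0 <= 72 * t ^ 2 - 230 * t + 396)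
  by (pose proof (pow2_ge_0 (t - 115 / 72)); nra).
assert (Hcubic : 0 <= 36 * (2 * t ^ 2 + 11) - t * (18 * t ^ 2 + 149)) by nra.
assert (Hq : 2 * q <= 1 + q ^ 2) by (pose proof (pow2_ge_0 (q - 1)); nra).
assert (Hpos : 0 <= t * (18 * t ^ 2 + 149)) by nra.
unfold gap0; nra.
Qed.

Lemma Msq_le_at0 (q t : R) :
  0 <= q -> 0 <= t -> t ^ 2 <= 9 / 2 -> Msq q t <= Msq q 0.
Proof.
intros Hq Ht Htw.
pose proof (gap0_ge0 q t Ht Htw) as Hgap.
enough (0 <= Msq q 0 - Msq q t) by lra.
rewrite Msq_sub_at0; apply Rdiv_le_0_compat; [apply Rmult_le_pos|]; nra.
Qed.

Definition gap1 (q t : R) : R :=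
  2 * (1 + q ^ 2) * (22 * t ^ 2 - 4 * t + 117) - q * (t + 1) * (22 * t ^ 2 + 167).

Lemma Msq_sub_at1 (q t : R) :
  Msq q 1 - Msq q t = q * (t - 1) * gap1 q t / (11 * (2 * t ^ 2 + 9)).
Proof. unfold Msq, gap1; field; nra. Qed.

Lemma gap1_ge0 (q t : R) :
  0 <= q <= 3 / 4 -> 0 <= t -> t ^ 2 <= 9 / 2 -> 0 <= gap1 q t.
Proof.
intros Hq Ht0 Htw.
assert (Hcube : t ^ 3 <= 9 / 2 * t) by nra.
assert (Hquad : 0 <= 836 * t ^ 2 - 3392 * t + 3846)
  by (pose proof (pow2_ge_0 (t - 1696 / 836)); nra).
assert (Hcubic :
  0 <= 50 * (22 * t ^ 2 - 4 * t + 117) - 12 * (t + 1) * (22 * t ^ 2 + 167)) by nra.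
assert (Hq25 : 25 * q <= 12 * (1 + q ^ 2)) by nra.
assert (Hpos : 0 <= 22 * t ^ 2 - 4 * t + 117) by nra.
unfold gap1; nra.
Qed.

Lemma Msq_le_at1 (q t : R) :
  0 <= q <= 3 / 4 -> 1 <= t -> t ^ 2 <= 9 / 2 -> Msq q t <= Msq q 1.
Proof.
intros Hq Ht Htw.
pose proof (gap1_ge0 q t Hq ltac:(lra) Htw) as Hgap.
enough (0 <= Msq q 1 - Msq q t) by lra.
rewrite Msq_sub_at1; apply Rdiv_le_0_compat; [apply Rmult_le_pos|]; nra.
Qed.

Theorem lemma4 :
  (forall q : R, 3/5 <= q <= 1 ->
     forall t : R, 0 <= t <= w ->
       M q t <= M q 0 /\ M0 q t <= M0 q 0) /\
  (forall q : R, 3/5 <= q <= 3/4 ->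
     forall t : R, 1 <= t <= w ->
       M q t <= M q 1 /\ M0 q t <= M0 q 1).
Proof.
split; intros q Hq t Ht; apply M_M0_le_of_Msq_le; try lra.
- apply Msq_le_at0; try lra; apply sqr_le_w_sqr; lra.
- apply Msq_le_at1; try lra; apply sqr_le_w_sqr; lra.
Qed.
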